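(* Let $Q=\{(x,y)\in\mathbb R^2: x,y>0\}$, identified with the interior $\{[x:y:1]:x,y>0\}$ of a triangle in ${\mathbb RP}^2$, with its Hilbert metric $d_Q(b,c)=|\log cr(a,b,c,d)|$. Then the Hilbert area form on $Q$ is $$\omega_Q=\frac{dx\,dy}{xy}.$$
   Context: Hilbert metric on a properly convex open set $\Omega$: for $b,c\in\Omega$ let the projective line through them meet $\partial\Omega$ at $a,d$ with $a,b,c,d$ in order; $d_\Omega(b,c)=|\log cr(a,b,c,d)|$ with $cr(y_1,y_2,y_3,y_4)=\frac{(y_1-y_3)(y_2-y_4)}{(y_1-y_2)(y_3-y_4)}$ (here without the factor $1/2$). This is a Finsler metric. The p-area of a 2-dimensional normed space $(V,\|\cdot\|)$ is $K^{-1}\lambda$ where $\lambda$ is Lebesgue measure from an inner product and $K$ is the supremum of $\lambda$-areas of parallelograms spanned by two vectors of norm $\le1$. The Hilbert area form is the p-area of the Hilbert Finsler norm on each tangent space. *)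

From HB Require Import structures.
From mathcomp Require Import all_boot all_order all_algebra.
From mathcomp Require Import all_classical all_reals all_analysis.
Set Implicit Arguments. Unset Strict Implicit. Unset Printing Implicit Defensive.
Import Order.TTheory GRing.Theory Num.Theory numFieldNormedType.Exports.
Local Open Scope classical_set_scope.
Local Open Scope ring_scope.

Section Hilbert.
Variable R : realType.

(* The affine chart {[x:y:1]} of RP^2 is identified with R^2 = R * R. *)

Definition line_params (Om : set (R * R)) (b c : R * R) : set R :=
  [set s : R | Om (b.1 + s * (c.1 - b.1), b.2 + s * (c.2 - b.2))].

(* Cross ratio cr(a,b,c,d) where, in the affine parameter s of the line
   b + s(c-b), one has b = 0, c = 1, a = s_- = inf, d = s_+ = sup.
   cr(a,b,c,d) = (a-c)(b-d)/((a-b)(c-d))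
               = ((1 - s_-)/(- s_-)) * (s_+/(s_+ - 1)).
   When the boundary point lies on the line at infinity (the parameter set
   is unbounded on that side), the corresponding factor is 1, which is the
   value of the projective cross ratio with that point at infinity. *)
Definition cr_plus (Om : set (R * R)) (b c : R * R) : R :=
  let S := line_params Om b c in
  if pselect (has_ubound S) then sup S / (sup S - 1) else 1.

Definition cr_minus (Om : set (R * R)) (b c : R * R) : R :=
  let S := line_params Om b c in
  if pselect (has_lbound S) then (1 - inf S) / (- inf S) else 1.

Definition hilbert_cr (Om : set (R * R)) (b c : R * R) : R :=
  cr_minus Om b c * cr_plus Om b c.

(* Hilbert metric d_Om(b,c) = |log cr(a,b,c,d)| (no factor 1/2). *)
Definition hilbert_dist (Om : set (R * R)) (b c : R * R) : R :=
  `| ln (hilbert_cr Om b c) |.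

Definition hilbert_norm (Om : set (R * R)) (p v : R * R) : R :=
  let f : R -> R :=
    fun t => hilbert_dist Om p (p.1 + t * v.1, p.2 + t * v.2) / t in
  lim (f @ at_right (0 : R)).

Definition hilbert_K (Om : set (R * R)) (p : R * R) : R :=
  sup [set r : R | exists u w : R * R,
         [/\ hilbert_norm Om p u <= 1, hilbert_norm Om p w <= 1 &
             r = `| u.1 * w.2 - u.2 * w.1 |] ].

(* The Hilbert area form at p is the p-area K^{-1} dx dy; this is its
   density with respect to Lebesgue measure dx dy. *)
Definition hilbert_area_density (Om : set (R * R)) (p : R * R) : R :=
  (hilbert_K Om p)^-1.

Definition quadrant : set (R * R) := [set p | 0 < p.1 /\ 0 < p.2].

End Hilbert.

From mathcomp Require Import all_boot all_order all_algebra.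
From mathcomp Require Import all_classical all_reals all_analysis.
From mathcomp Require Import ring lra.
Import Order.TTheory GRing.Theory Num.Theory numFieldNormedType.Exports.
Set Implicit Arguments. Unset Strict Implicit. Unset Printing Implicit Defensive.
Local Open Scope classical_set_scope.
Local Open Scope ring_scope.

(* Along the line through p = (x, y) with direction v, set a = v.1 / x and
   b = v.2 / y.  The point p + s (t v) lies in the quadrant iff 1 + s t a > 0
   and 1 + s t b > 0, so in the affine parameter s the chord is the interval
   ]-1/(tP), 1/(tN)[ with P = max(0, a, b) and N = max(0, -a, -b), and the
   cross ratio is (1 + tP) / (1 - tN).  Its logarithm is tP + tN + o(t), so
   the Finsler norm of v is P + N.  In the coordinates (a, b) its unit ball is
   the hexagon |a|, |b|, |a - b| <= 1, on which the largest parallelogram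
   spanned by two vectors has area 1; undoing the scaling gives K = x y. *)

Section HilbertQuadrant.
Variable R : realType.
Implicit Types (P N a b s t u x y : R) (S : set R) (Om : set (R * R)).

(* For P, N >= 0 this is ]-1/P, 1/N[, a side being unbounded when P or N is 0. *)
Definition chord P N : set R := [set s | s * N < 1 /\ - s * P < 1].

Lemma sup_itv_sandwich S a u : a < u -> `[a, u[ `<=` S -> S `<=` `]-oo, u[ ->
  sup S = u.
Proof.
move=> au inS Sin; have Sa : S a by apply: inS; rewrite /= in_itv/= lexx au.
have supS : has_sup S.
  by split; [exists a | exists u => s /Sin; rewrite /= in_itv/= => /ltW].
apply/eqP; rewrite eq_le; apply/andP; split.
- rewrite -[leRHS](real_interval.sup_itv (a := -oo%O) (b := true)) //.
  by rewrite sup_le //; [exact: subset_trans Sin (@le_down _ _) | exists a].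
- rewrite -[leLHS](real_interval.sup_itv (a := BLeft a) (b := true)) ?bnd_simp //.
  rewrite sup_le //; first exact: subset_trans inS (@le_down _ _).
  by exists a; rewrite /= in_itv/= lexx au.
Qed.

Lemma chordN P N : -%R @` chord P N = chord N P.
Proof.
apply/seteqP; split=> [_ [s [sN sP] <-]|s [sP sN]].
  by split; rewrite ?opprK // mulNr.
by exists (- s); [split; rewrite ?opprK // mulNr | rewrite opprK].
Qed.

Lemma sup_chord P N : 0 <= P -> 0 < N ->
  has_ubound (chord P N) /\ sup (chord P N) = N^-1.
Proof.
move=> P0 N0; have NV : N^-1 * N = 1 by rewrite mulVf // gt_eqF.
have lt_NV s : chord P N s -> s < N^-1 by move=> [sN _]; rewrite -(ltr_pM2r N0) NV.
split; first by exists N^-1 => s /lt_NV /ltW.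
apply: (@sup_itv_sandwich _ 0); first by rewrite invr_gt0.
- move=> s; rewrite /= in_itv/= => /andP[s0 sN]; split; last by nra.
  by rewrite -(ltr_pM2r N0) NV in sN.
- by move=> s /lt_NV; rewrite /= in_itv.
Qed.

Lemma chord_unbounded P : 0 <= P -> ~ has_ubound (chord P 0).
Proof.
move=> P0 [M ubM]; have M0 : M <= Num.max M 0 by rewrite le_max lexx.
have M0' : 0 <= Num.max M 0 by rewrite le_max lexx orbT.
have M1 : chord P 0 (Num.max M 0 + 1).
  by split; rewrite ?mulr0 ?ltr01 //; nra.
by have := ubM _ M1; lra.
Qed.

Lemma cr_plus_chord Om p q P N : 0 <= P -> 0 <= N < 1 ->
  line_params Om p q = chord P N -> cr_plus Om p q = (1 - N)^-1.
Proof.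
move=> P0 /andP[N0 N1] eS; rewrite /cr_plus /= eS.
have [->|N0'] := eqVneq N 0.
  case: pselect => [ubS|_] /=; last by rewrite subr0 invr1.
  by case: (chord_unbounded P0 ubS).
have Npos : 0 < N by rewrite lt0r N0' N0.
have [ubS ->] := sup_chord P0 Npos.
case: pselect => // _ /=.
by field; rewrite subr_eq0 eq_sym lt_eqF.
Qed.

Lemma cr_minus_chord Om p q P N : 0 <= P -> 0 <= N ->
  line_params Om p q = chord P N -> cr_minus Om p q = 1 + P.
Proof.
move=> P0 N0 eS; rewrite /cr_minus /= eS /inf chordN.
have [->|P0'] := eqVneq P 0.
  case: pselect => [lbS|_] /=; last by rewrite addr0.
  by move: lbS; rewrite has_lb_ubN chordN => /(chord_unbounded N0).
have Ppos : 0 < P by rewrite lt0r P0' P0.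
have [ubS ->] := sup_chord N0 Ppos.
case: pselect => [_|nlbS] /=; last by case: nlbS; rewrite has_lb_ubN chordN.
by rewrite opprK; field.
Qed.

Lemma hilbert_cr_chord Om p q P N : 0 <= P -> 0 <= N < 1 ->
  line_params Om p q = chord P N -> hilbert_cr Om p q = (1 + P) / (1 - N).
Proof.
move=> P0 /[dup] /andP[N0 _] N01 eS.
by rewrite /hilbert_cr (cr_minus_chord P0 N0 eS) (cr_plus_chord P0 N01 eS).
Qed.

Definition posmax a b := Num.max 0 (Num.max a b).

Lemma posmax_ge0 a b : 0 <= posmax a b.
Proof. by rewrite le_max lexx. Qed.

Lemma posmax_ge a b : a <= posmax a b /\ b <= posmax a b.
Proof. by rewrite /posmax !le_max !lexx !orbT. Qed.

Lemma posmaxM t a b : 0 <= t -> posmax (t * a) (t * b) = t * posmax a b.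
Proof. by move=> t0; rewrite /posmax !maxr_pMr // mulr0. Qed.

Lemma posmax_lt1 u a b : 0 <= u ->
  (u * posmax a b < 1) = (u * a < 1) && (u * b < 1).
Proof. by move=> u0; rewrite -posmaxM // /posmax !gt_max ltr01. Qed.

Lemma chord_posmaxP a b s : 0 < 1 + s * a /\ 0 < 1 + s * b <->
  chord (posmax a b) (posmax (- a) (- b)) s.
Proof.
rewrite /chord /=; have [s0|s0] := leP 0 s.
- have : - s * posmax a b <= 0 by rewrite mulNr oppr_le0 mulr_ge0 ?posmax_ge0.
  rewrite posmax_lt1 // !mulrN; split=> [[]|[/andP[]]]; lra.
- have : s * posmax (- a) (- b) <= 0 by rewrite mulr_le0_ge0 ?posmax_ge0 // ltW.
  rewrite (@posmax_lt1 (- s)) ?oppr_ge0 ?(ltW s0) // !mulNr.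
  by split=> [[]|[_ /andP[]]]; lra.
Qed.

Lemma line_params_quadrant x y t v1 v2 : 0 < x -> 0 < y -> 0 <= t ->
  line_params (@quadrant R) (x, y) (x + t * v1, y + t * v2) =
  chord (t * posmax (v1 / x) (v2 / y)) (t * posmax (- (v1 / x)) (- (v2 / y))).
Proof.
move=> x0 y0 t0; rewrite -!posmaxM // !(mulrN t) predeqE => s.
rewrite -chord_posmaxP /line_params /quadrant /=.
have scale c u : 0 < c -> c + s * (c + t * u - c) = c * (1 + s * (t * (u / c))).
  by move=> c0; field; rewrite gt_eqF.
by rewrite !scale // !pmulr_rgt0.
Qed.

Lemma ln_le_subr1 x : 0 < x -> ln x <= x - 1.
Proof. by move=> x0; rewrite -[x in ln x](subrK 1) addrC le_ln1Dx //; lra. Qed.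

Lemma ln_ge_1BV x : 0 < x -> 1 - x^-1 <= ln x.
Proof.
move=> x0; have := ln_le_subr1 (x := x^-1).
by rewrite invr_gt0 lnV ?posrE // => /(_ x0); lra.
Qed.

Lemma ln_ratio_bounds P N : 0 <= P -> 0 <= N < 1 ->
  (P + N) / (1 + P) <= ln ((1 + P) / (1 - N)) <= (P + N) / (1 - N).
Proof.
move=> P0 /andP[N0 N1]; have Q0 : 0 < (1 + P) / (1 - N) by apply: divr_gt0; lra.
have [P1 N1'] : 1 + P != 0 /\ 1 - N != 0 by split; rewrite gt_eqF //; lra.
have -> : (P + N) / (1 + P) = 1 - ((1 + P) / (1 - N))^-1 by field; rewrite P1 N1'.
have -> : (P + N) / (1 - N) = (1 + P) / (1 - N) - 1 by field.
by rewrite ln_ge_1BV ?ln_le_subr1.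
Qed.

Lemma cvg_div_1DMx u K : (fun t => u / (1 + t * K)) @ 0^'+ --> u.
Proof.
apply: cvg_at_right_filter.
have : (fun t => u / (1 + t * K)) @ 0 --> u / (1 + 0 * K).
  apply: cvgM; first exact: cvg_cst.
  apply: cvgV; first by rewrite mul0r addr0 oner_neq0.
  by apply: cvgD; [exact: cvg_cst | apply: cvgM; [exact: cvg_id | exact: cvg_cst]].
by rewrite mul0r addr0 divr1.
Qed.

Definition hexagon_norm a b := posmax a b + posmax (- a) (- b).

Section Direction.
Variables (x y : R) (v : R * R).
Hypotheses (x0 : 0 < x) (y0 : 0 < y).
Let P := posmax (v.1 / x) (v.2 / y).
Let N := posmax (- (v.1 / x)) (- (v.2 / y)).

Lemma hilbert_dist_quadrant t : 0 <= t -> t * N < 1 ->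
  hilbert_dist (@quadrant R) (x, y) (x + t * v.1, y + t * v.2) =
  ln ((1 + t * P) / (1 - t * N)).
Proof.
move=> t0 tN1; have [tP0 tN0] : 0 <= t * P /\ 0 <= t * N.
  by split; apply: mulr_ge0; rewrite ?posmax_ge0.
have tN01 : 0 <= t * N < 1 by rewrite tN0.
rewrite /hilbert_dist (hilbert_cr_chord tP0 tN01) ?line_params_quadrant //.
have /andP[lo _] := ln_ratio_bounds tP0 tN01.
by rewrite ger0_norm // (le_trans _ lo) // divr_ge0 //; lra.
Qed.

Lemma hilbert_dist_quadrant_bounds t : 0 < t -> t * N < 1 ->
  (P + N) / (1 + t * P) <=
    hilbert_dist (@quadrant R) (x, y) (x + t * v.1, y + t * v.2) / t <=
  (P + N) / (1 - t * N).
Proof.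
move=> t0 tN1; have [tP0 tN0] : 0 <= t * P /\ 0 <= t * N.
  by split; apply: mulr_ge0; rewrite ?posmax_ge0 ?(ltW t0).
have tN01 : 0 <= t * N < 1 by rewrite tN0.
have scale d : (P + N) / d * t = (t * P + t * N) / d by ring.
rewrite (hilbert_dist_quadrant (ltW t0) tN1) ler_pdivlMr // ler_pdivrMr // !scale.
exact: ln_ratio_bounds.
Qed.

Lemma hilbert_norm_quadrant :
  hilbert_norm (@quadrant R) (x, y) v = hexagon_norm (v.1 / x) (v.2 / y).
Proof.
have N1 : 0 < N + 1 by rewrite ltr_wpDl ?posmax_ge0.
rewrite /hilbert_norm /=; apply: cvg_lim; first exact: norm_hausdorff.
apply: (squeeze_cvgr (f := fun t => (P + N) / (1 + t * P))
                     (h := fun t => (P + N) / (1 + t * - N))); last 2 first.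
- exact: cvg_div_1DMx.
- exact: cvg_div_1DMx.
near=> t; have t0 : 0 < t by near: t; exact: nbhs_right_gt.
have : t < (N + 1)^-1 by near: t; apply: nbhs_right_lt; rewrite invr_gt0.
rewrite -div1r ltr_pdivlMr // => tN1.
by rewrite mulrN; apply: hilbert_dist_quadrant_bounds => //; nra.
Unshelve. all: by end_near.
Qed.

End Direction.

Lemma hexagon_norm_le1 a b : hexagon_norm a b <= 1 ->
  [/\ `|a| <= 1, `|b| <= 1 & `|a - b| <= 1].
Proof.
have [P0 [Pa Pb]] := (posmax_ge0 a b, posmax_ge a b).
have [N0 [Na Nb]] := (posmax_ge0 (- a) (- b), posmax_ge (- a) (- b)).
by rewrite /hexagon_norm => h; split; rewrite ler_norml; apply/andP; split; lra.
Qed.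

(* The determinant is linear in each vector, so its absolute value is maximal
   at vertices of the hexagon, where it is at most 1. *)
Lemma hexagon_det_le1 a1 b1 a2 b2 :
  hexagon_norm a1 b1 <= 1 -> hexagon_norm a2 b2 <= 1 -> `|a1 * b2 - b1 * a2| <= 1.
Proof.
move=> /hexagon_norm_le1[/ler_normlP[? ?] /ler_normlP[? ?] /ler_normlP[? ?]].
move=> /hexagon_norm_le1[/ler_normlP[? ?] /ler_normlP[? ?] /ler_normlP[? ?]].
rewrite ler_norml; apply/andP; split;
  have [ha|ha] := leP 0 a1; have [hb|hb] := leP 0 b1; have [hab|hab] := leP a1 b1;
  nra.
Qed.

Lemma hexagon_norm10 : hexagon_norm 1 0 = 1.
Proof.
by rewrite /hexagon_norm /posmax oppr0 !maxEle !(ler01, lerN10, ler10, lexx) /= addr0.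
Qed.

Lemma hexagon_norm01 : hexagon_norm 0 1 = 1.
Proof.
by rewrite /hexagon_norm /posmax oppr0 !maxEle !(ler01, ler0N1, ler10, lexx) /= addr0.
Qed.

Lemma hilbert_K_quadrant x y : 0 < x -> 0 < y ->
  hilbert_K (@quadrant R) (x, y) = x * y.
Proof.
move=> x0 y0; rewrite /hilbert_K; set T := [set r | _].
have xy0 : 0 < x * y by rewrite mulr_gt0.
have ubT : ubound T (x * y).
  move=> _ [u [w [hu hw ->]]]; rewrite !hilbert_norm_quadrant // in hu hw.
  have -> : u.1 * w.2 - u.2 * w.1 =
            x * y * (u.1 / x * (w.2 / y) - u.2 / y * (w.1 / x)).
    by field; rewrite !gt_eqF.
  rewrite normrM gtr0_norm //; apply: ler_piMr; first exact: ltW.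
  exact: hexagon_det_le1.
have Txy : T (x * y).
  exists (x, 0), (0, y); rewrite !hilbert_norm_quadrant //= !mul0r !divff ?gt_eqF //.
  by rewrite hexagon_norm10 hexagon_norm01 subr0 gtr0_norm.
by apply/eqP; rewrite eq_le ge_sup ?ub_le_sup //; exists (x * y).
Qed.

End HilbertQuadrant.

Theorem lemma2p4 (R : realType) (x y : R) (hx : 0 < x) (hy : 0 < y) :
  hilbert_area_density (@quadrant R) (x, y) = 1 / (x * y).
Proof. by rewrite /hilbert_area_density hilbert_K_quadrant // div1r. Qed.
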